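(* Let lines in the real projective plane be in bounded general position, with associated graph $G$. Then every edge of $G$ lies on the boundary of at least one alcove.
   Context: Lines in $\mathbb{R}P^2$ are in general position if no three pass through a common point, and in bounded position if all pairwise intersections lie in $\mathbb{R}^2$. The graph $G$ has as vertices the pairwise intersection points of the lines; two vertices are joined by an edge if some line of the arrangement contains both and no third vertex lies between them on that line; the edge is the closed segment joining them. An alcove is a subset $V\subset\mathbb{R}^2$ which is compact, convex and connected, whose boundary is a union of edges of $G$ belonging to distinct lines, and which contains no proper subset with these two properties. *)

From HB Require Import structures.
From mathcomp Require Import all_boot all_order all_algebra.
From mathcomp Require Import all_classical all_reals all_analysis.
Set Implicit Arguments. Unset Strict Implicit. Unset Printing Implicit Defensive.
Import Order.TTheory GRing.Theory Num.Theory numFieldNormedType.Exports.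
Local Open Scope classical_set_scope.
Local Open Scope ring_scope.

Section Arr.
Variable R : realType.

(* Points of R^2 are pairs; a line is a triple (a, b, c) with (a,b) <> (0,0),
   denoting {(x,y) | a x + b y = c}. *)
Definition on_line (l : R * R * R) (p : R * R) : Prop :=
  l.1.1 * p.1 + l.1.2 * p.2 = l.2.

Definition is_line (l : R * R * R) : Prop := l.1.1 != 0 \/ l.1.2 != 0.

(* Bounded position: pairwise intersections are points of R^2 (no two
   lines parallel or equal). *)
Definition bounded_position n (L : 'I_n -> R * R * R) : Prop :=
  forall i j : 'I_n, i != j -> (L i).1.1 * (L j).1.2 - (L j).1.1 * (L i).1.2 != 0.

Definition general_position n (L : 'I_n -> R * R * R) : Prop :=
  forall (i j k : 'I_n) (p : R * R), i != j -> j != k -> i != k ->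
    on_line (L i) p -> on_line (L j) p -> on_line (L k) p -> False.

Definition vertex n (L : 'I_n -> R * R * R) (p : R * R) : Prop :=
  exists i j : 'I_n, i != j /\ on_line (L i) p /\ on_line (L j) p.

Definition seg (p q : R * R) : set (R * R) :=
  [set x | exists t : R, 0 <= t <= 1 /\
     x = (p.1 + t * (q.1 - p.1), p.2 + t * (q.2 - p.2))].

Definition edge_on n (L : 'I_n -> R * R * R) (k : 'I_n) (E : set (R * R)) : Prop :=
  exists p q : R * R, p <> q /\ vertex L p /\ vertex L q /\
    on_line (L k) p /\ on_line (L k) q /\
    (forall r, vertex L r -> seg p q r -> r = p \/ r = q) /\
    E = seg p q.

Definition edge n (L : 'I_n -> R * R * R) (E : set (R * R)) : Prop :=
  exists k, edge_on L k E.

Definition convex_set (A : set (R * R)) : Prop :=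
  forall p q, A p -> A q -> seg p q `<=` A.

Definition boundary (A : set (R * R)) : set (R * R) := closure A `\` A°.

Definition boundary_of_edges n (L : 'I_n -> R * R * R) (V : set (R * R)) : Prop :=
  exists (K : set 'I_n) (E : 'I_n -> set (R * R)),
    (forall k, K k -> edge_on L k (E k)) /\
    boundary V = \bigcup_(k in K) E k.

(* The properties in the definition of an alcove (plus nonempty interior). *)
Definition alcove_like n (L : 'I_n -> R * R * R) (V : set (R * R)) : Prop :=
  [/\ compact V, convex_set V, connected V, V° !=set0 &
      boundary_of_edges L V].

Definition alcove n (L : 'I_n -> R * R * R) (V : set (R * R)) : Prop :=
  alcove_like L V /\
  forall W, W `<=` V -> W <> V -> ~ alcove_like L W.

End Arr.

(* Let the edge [p, q] lie on line k, let p also lie on line a and q on line b, and let r be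
   the point where a and b meet; by general position r is not on k.  For every line take the
   closed half-plane containing the midpoint of [p, q], and for k the one containing r.  Their
   intersection is the required alcove.  It lies in the triangle p q r, so it is compact; no line
   crosses the open edge, so [p, q] lies in it and on its boundary; points slightly inside from
   the midpoint towards r are interior.  Each side of it is the trace of one line, a segment
   whose endpoints lie on other lines and which no other line cuts in its interior (bounded
   position), i.e. an edge of G.  It is minimal: a smaller candidate W has a boundary point on
   the segment from an interior point of W to a point of the cell outside W; that point lies on
   an edge, hence on a line, yet strictly inside every half-plane. *)

From Pilot Require Import Defs.
From HB Require Import structures.
From mathcomp Require Import all_boot all_order all_algebra.
From mathcomp Require Import all_classical all_reals all_analysis.
From mathcomp Require Import ring lra.
Import Order.TTheory GRing.Theory Num.Theory numFieldNormedType.Exports.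
Local Open Scope classical_set_scope.
Local Open Scope ring_scope.
Set Implicit Arguments. Unset Strict Implicit.

Section RealSteps.
Variable R : realType.

Lemma small_step1 (a b : R) : 0 < a \/ (a = 0 /\ 0 <= b) ->
  exists2 e, 0 < e & forall d, 0 < d <= e -> 0 <= a + d * b /\ (0 < a -> 0 < a + d * b).
Proof.
case=> [a0|[-> b0] ]; last first.
  exists 1 => // d /andP[d0 _]; rewrite add0r ltxx.
  by split => //; rewrite mulr_ge0 // ltW.
have b1 : 0 < `|b| + 1 by rewrite ltr_wpDl.
exists (a / (`|b| + 1)); first by rewrite divr_gt0.
move=> d /andP[d0]; rewrite ler_pdivlMr // => de.
have nb : - `|b| <= b by rewrite lerNl -normrN ler_norm.
suff : 0 < a + d * b by move=> h; split=> //; exact: ltW.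
nra.
Qed.

Lemma small_step (I : finType) (a b : I -> R) :
  (forall i, 0 < a i \/ (a i = 0 /\ 0 <= b i)) ->
  exists2 e, 0 < e & forall i, 0 <= a i + e * b i /\ (0 < a i -> 0 < a i + e * b i).
Proof.
move=> H; have [f f0 Hf] := fin_all_exists2 (fun i => small_step1 (H i)).
have e0 : 0 < \big[Num.min/1]_i f i by apply/bigmin_gtP; split.
by exists (\big[Num.min/1]_i f i) => // i; apply: Hf; rewrite e0 bigmin_le.
Qed.

Lemma half_in_unit : 0 < (2^-1 : R) < 1.
Proof. by rewrite invr_gt0 ltr0n invf_lt1 ?ltr1n. Qed.

Lemma affine_ge0_unit (a b : R) :
  (forall t, 0 < t < 1 -> a + t * b != 0) -> 0 < a + 2^-1 * b ->
  forall t, 0 <= t <= 1 -> 0 <= a + t * b.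
Proof.
move=> nz hm t /andP[t0 t1]; rewrite leNgt; apply/negP => ht.
have /andP[h2 h2'] := half_in_unit.
have b0 : b != 0.
  by apply/eqP => b0; move: hm ht; rewrite b0 !mulr0 !addr0; lra.
pose r := - a / b; have rb : r * b = - a by rewrite divfK.
suff : 0 < r < 1 by move/nz; rewrite rb subrr eqxx.
move: b0; rewrite neq_lt => /orP[bn|bp].
- have : r < t by nra.
  have : 2^-1 < r by nra.
  move=> *; apply/andP; split; lra.
- have : t < r by nra.
  have : r < 2^-1 by nra.
  move=> *; apply/andP; split; lra.
Qed.

Lemma closed_sup_mem (A : set R) : closed A -> A !=set0 -> has_ubound A -> A (sup A).
Proof. by move=> cA A0 Au; have := closure_sup A0 Au; rewrite -(closure_id A).1. Qed.

Lemma norm_convex3 (w1 w2 w3 v1 v2 v3 : R) : 0 <= w1 -> 0 <= w2 -> 0 <= w3 ->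
  w1 + w2 + w3 = 1 -> `|v1 * w1 + v2 * w2 + v3 * w3| <= `|v1| + `|v2| + `|v3|.
Proof.
move=> w10 w20 w30 ws.
have le1 v w : 0 <= w -> w <= 1 -> `|v * w| <= `|v|.
  by move=> w0 w_1; rewrite normrM (ger0_norm w0) ler_piMr.
by apply: le_trans (ler_normD _ _) _; rewrite lerD ?le1 //;
  [apply: le_trans (ler_normD _ _) _; rewrite lerD ?le1 //|]; lra.
Qed.

End RealSteps.

Section AffinePlane.
Variable R : realType.
Implicit Types (l : R * R * R) (x y d : R * R) (t : R).

Definition lineval l x : R := l.1.1 * x.1 + l.1.2 * x.2 - l.2.
Definition linpart l d : R := l.1.1 * d.1 + l.1.2 * d.2.
Definition along x t d : R * R := (x.1 + t * d.1, x.2 + t * d.2).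
Definition vec x y : R * R := (y.1 - x.1, y.2 - x.2).
Definition sqnorm d : R := d.1 * d.1 + d.2 * d.2.
Definition dir l : R * R := (- l.1.2, l.1.1).

Lemma on_lineE l x : on_line l x <-> lineval l x = 0.
Proof.
by rewrite /on_line /lineval; split=> [->|/eqP]; [rewrite subrr | rewrite subr_eq0 => /eqP].
Qed.

Lemma lineval_along l x t d : lineval l (along x t d) = lineval l x + t * linpart l d.
Proof. rewrite /lineval /along /linpart /=; ring. Qed.

Lemma linpart_vec l x y : linpart l (vec x y) = lineval l y - lineval l x.
Proof. rewrite /lineval /vec /linpart /=; ring. Qed.

Lemma linpart_dir l : linpart l (dir l) = 0.
Proof. rewrite /linpart /dir /=; ring. Qed.

Lemma linpartN l d : linpart l (- d.1, - d.2) = - linpart l d.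
Proof. rewrite /linpart /=; ring. Qed.

Lemma along0 x d : along x 0 d = x.
Proof. by case: x => a b; rewrite /along /= !mul0r !addr0. Qed.

Lemma alongD x t u d : along (along x t d) u d = along x (t + u) d.
Proof. rewrite /along /=; congr (_, _); ring. Qed.

Lemma alongN x t d : along x t (- d.1, - d.2) = along x (- t) d.
Proof. rewrite /along /=; congr (_, _); ring. Qed.

Lemma along_vec1 x y : along x 1 (vec x y) = y.
Proof. case: x y => [a b] [c e]; rewrite /along /vec /=; congr (_, _); ring. Qed.

Lemma along_vec x t u v d :
  along (along x t d) u (vec (along x t d) (along x v d)) = along x (t + u * (v - t)) d.
Proof. rewrite /along /vec /=; congr (_, _); ring. Qed.

Lemma along_vec0 x u v d : along x u (vec x (along x v d)) = along x (u * v) d.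
Proof. rewrite /along /vec /=; congr (_, _); ring. Qed.

Lemma sqnorm_gt0 d : d.1 != 0 \/ d.2 != 0 -> 0 < sqnorm d.
Proof.
have sq_gt0 (z : R) : z != 0 -> 0 < z * z by rewrite -expr2 lt_def sqrf_eq0 sqr_ge0 andbT.
rewrite /sqnorm; case=> d0.
- by apply: ltr_pwDl; [exact: sq_gt0 | rewrite -expr2 sqr_ge0].
- by apply: ltr_pwDr; [exact: sq_gt0 | rewrite -expr2 sqr_ge0].
Qed.

Lemma sqnorm_vec_gt0 x y : x <> y -> 0 < sqnorm (vec x y).
Proof.
case: x y => [a b] [c e] xy; apply: sqnorm_gt0; rewrite /vec /= !subr_eq0.
have [ca|] := eqVneq c a; last by left.
by have [eb|] := eqVneq e b; [rewrite ca eb in xy | right].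
Qed.

Lemma sqnorm_dir l : is_line l -> 0 < sqnorm (dir l).
Proof. by move=> hl; rewrite /sqnorm /dir /= mulrNN addrC; apply: sqnorm_gt0. Qed.

Lemma sqnormN d : sqnorm (- d.1, - d.2) = sqnorm d.
Proof. by rewrite /sqnorm /= !mulrNN. Qed.

Lemma along_inj x d : 0 < sqnorm d -> injective (along x ^~ d).
Proof.
move=> d0 t u [e1 e2]; have /addrI e1' := e1; have /addrI e2' := e2.
apply/eqP; rewrite -subr_eq0; apply/eqP.
have : (t - u) * sqnorm d = 0.
  have -> : (t - u) * sqnorm d = (t * d.1 - u * d.1) * d.1 + (t * d.2 - u * d.2) * d.2.
    by rewrite /sqnorm; ring.
  by rewrite e1' e2' !subrr !mul0r addr0.
by move/eqP; rewrite mulf_eq0 (gt_eqF d0) orbF => /eqP.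
Qed.

Lemma continuous_along x d : continuous (along x ^~ d).
Proof.
move=> t; apply: (cvg_pair (G := nbhs (x.1 + t * d.1)) (H := nbhs (x.2 + t * d.2)));
  by apply: cvgD; [exact: cvg_cst | apply: cvgM; [exact: cvg_id | exact: cvg_cst]].
Qed.

Lemma continuous_lineval l : continuous (lineval l).
Proof.
move=> x; apply: cvgB; last exact: cvg_cst.
by apply: cvgD; (apply: cvgM; [exact: cvg_cst|]); [exact: cvg_fst | exact: cvg_snd].
Qed.

Lemma nbhs_along x t d (A : set (R * R)) : nbhs (along x t d) A ->
  exists2 e, 0 < e & forall u, `|t - u| < e -> A (along x u d).
Proof. by move=> /continuous_along /nbhs_ballP [e e0 He]; exists e => // u /He. Qed.

Lemma seg_along p q z : seg p q z <-> exists t, 0 <= t <= 1 /\ z = along p t (vec p q).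
Proof. by []. Qed.

Lemma lineval_seg l p q z : on_line l p -> on_line l q -> seg p q z -> lineval l z = 0.
Proof.
move=> /on_lineE lp /on_lineE lq /seg_along [t [_ ->]].
by rewrite lineval_along linpart_vec lp lq subrr mulr0 addr0.
Qed.

Lemma line_param l x y : is_line l -> lineval l x = 0 -> lineval l y = 0 ->
  exists t, y = along x t (dir l).
Proof.
move=> /sqnorm_dir; case: x y l => [x1 x2] [y1 y2] [[a b] c].
rewrite /lineval /along /sqnorm /dir /=; set N := _ + _ => N0 lx ly.
have e : a * (y1 - x1) + b * (y2 - x2) = 0.
  have -> : a * (y1 - x1) + b * (y2 - x2) = (a * y1 + b * y2 - c) - (a * x1 + b * x2 - c).
    by ring.
  by rewrite lx ly subrr.
set Z := a * (y2 - x2) - b * (y1 - x1).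
have k1 : (y1 - x1) * N = Z * - b.
  by apply/eqP; rewrite -subr_eq0 -(mulr0 a) -e; apply/eqP; rewrite /N /Z; ring.
have k2 : (y2 - x2) * N = Z * a.
  by apply/eqP; rewrite -subr_eq0 -(mulr0 b) -e; apply/eqP; rewrite /N /Z; ring.
exists (Z / N); congr (_, _).
- by rewrite mulrAC -k1 mulfK ?gt_eqF // addrC subrK.
- by rewrite mulrAC -k2 mulfK ?gt_eqF // addrC subrK.
Qed.

Lemma seg_boundary_point (W : set (R * R)) w x : closed W -> W w -> ~ W x ->
  exists2 t, 0 <= t < 1 & boundary W (along w t (vec w x)).
Proof.
move=> clW Ww nWx.
pose phi t := along w t (vec w x).
pose S := [set t : R | 0 <= t] `&` [set t | t <= 1] `&` phi @^-1` W.
have hS : has_sup S.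
  split; last by exists 1 => t [[_ ?] _].
  by exists 0; split; [rewrite /= lexx ler01 | rewrite /phi /= along0].
set ts := sup S.
have [[/= t0 t1] Wt] : S ts.
  apply: closed_sup_mem; [|exact: hS.1|exact: hS.2].
  rewrite /S; apply: closedI; first by apply: closedI; [exact: closed_ge | exact: closed_le].
  by apply: preimage_closed clW => t _; exact: continuous_along.
have t1' : ts < 1.
  by rewrite lt_def t1 andbT; apply/eqP => t_1; move: Wt; rewrite /= /phi -t_1 along_vec1.
exists ts; first by rewrite t0.
split; first exact: subset_closure.
move=> /nbhs_along [e e0 He].
pose del := Num.min e (1 - ts).
have del0 : 0 < del by rewrite lt_min e0 subr_gt0.
have [dele del1] : del <= e /\ del <= 1 - ts by apply/andP; rewrite -le_min.
have : S (ts + del / 2).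
  split; first by split => /=; lra.
  by apply: He; rewrite opprD addrA subrr sub0r normrN ger0_norm; lra.
by move/(sup_upper_bound hS); rewrite -/ts; lra.
Qed.

End AffinePlane.

Section Triangle.
Variable R : realType.
Implicit Types (l : R * R * R) (x : R * R).

Definition noncollinear (p q r : R * R) :=
  (q.1 - p.1) * (r.2 - p.2) - (r.1 - p.1) * (q.2 - p.2) != 0.

Lemma noncollinear_off_line l p q r : p <> q -> lineval l p = 0 -> lineval l q = 0 ->
  lineval l r != 0 -> noncollinear p q r.
Proof.
move=> /sqnorm_vec_gt0 pq lp lq lr; apply/eqP => D.
have lq' : linpart l (vec p q) = 0 by rewrite linpart_vec lq lp subrr.
have lr' : linpart l (vec p r) = lineval l r by rewrite linpart_vec lp subr0.
move: lq' lr' pq; rewrite /linpart /vec /sqnorm /= => lq' lr'.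
have e1 : (q.1 - p.1) * lineval l r = 0.
  rewrite -lr'.
  have -> : (q.1 - p.1) * (l.1.1 * (r.1 - p.1) + l.1.2 * (r.2 - p.2)) =
    (r.1 - p.1) * (l.1.1 * (q.1 - p.1) + l.1.2 * (q.2 - p.2)) +
    l.1.2 * ((q.1 - p.1) * (r.2 - p.2) - (r.1 - p.1) * (q.2 - p.2)) by ring.
  by rewrite lq' D !mulr0 addr0.
have e2 : (q.2 - p.2) * lineval l r = 0.
  rewrite -lr'.
  have -> : (q.2 - p.2) * (l.1.1 * (r.1 - p.1) + l.1.2 * (r.2 - p.2)) =
    (r.2 - p.2) * (l.1.1 * (q.1 - p.1) + l.1.2 * (q.2 - p.2)) -
    l.1.1 * ((q.1 - p.1) * (r.2 - p.2) - (r.1 - p.1) * (q.2 - p.2)) by ring.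
  by rewrite lq' D !mulr0 subr0.
move/eqP: e1; rewrite mulf_eq0 (negbTE lr) orbF => /eqP ->.
by move/eqP: e2; rewrite mulf_eq0 (negbTE lr) orbF => /eqP ->; rewrite mul0r addr0 ltxx.
Qed.

Lemma lineval_eq0_noncollinear l p q r : noncollinear p q r ->
  lineval l p = 0 -> lineval l q = 0 -> lineval l r = 0 -> forall x, lineval l x = 0.
Proof.
move=> D0 lp lq lr x.
have [A0 B0] : l.1.1 = 0 /\ l.1.2 = 0.
  have hA : l.1.1 * ((q.1 - p.1) * (r.2 - p.2) - (r.1 - p.1) * (q.2 - p.2)) =
    (r.2 - p.2) * (lineval l q - lineval l p) - (q.2 - p.2) * (lineval l r - lineval l p).
    by rewrite /lineval; ring.
  have hB : l.1.2 * ((q.1 - p.1) * (r.2 - p.2) - (r.1 - p.1) * (q.2 - p.2)) =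
    (q.1 - p.1) * (lineval l r - lineval l p) - (r.1 - p.1) * (lineval l q - lineval l p).
    by rewrite /lineval; ring.
  rewrite lp lq lr subrr !mulr0 subrr in hA hB.
  by split; apply/eqP; [move/eqP: hA | move/eqP: hB]; rewrite mulf_eq0 (negbTE D0) orbF.
by move: lp; rewrite /lineval A0 B0 !mul0r !add0r.
Qed.

Variables (l1 l2 l3 : R * R * R) (p1 p2 p3 : R * R).
Hypothesis p123 : noncollinear p1 p2 p3.
Hypotheses (l1p2 : lineval l1 p2 = 0) (l1p3 : lineval l1 p3 = 0).
Hypotheses (l2p1 : lineval l2 p1 = 0) (l2p3 : lineval l2 p3 = 0).
Hypotheses (l3p1 : lineval l3 p1 = 0) (l3p2 : lineval l3 p2 = 0).
Hypotheses (l1p1 : lineval l1 p1 != 0) (l2p2 : lineval l2 p2 != 0) (l3p3 : lineval l3 p3 != 0).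

Definition bary l p x := lineval l x / lineval l p.

Lemma lineval_bary h x : lineval h x =
  lineval h p1 * bary l1 p1 x + lineval h p2 * bary l2 p2 x + lineval h p3 * bary l3 p3 x.
Proof.
(* h minus the barycentric interpolation of its values is an affine form vanishing at p1 p2 p3 *)
pose k1 := lineval h p1 / lineval l1 p1; pose k2 := lineval h p2 / lineval l2 p2.
pose k3 := lineval h p3 / lineval l3 p3.
pose g : R * R * R := ((h.1.1 - (k1 * l1.1.1 + k2 * l2.1.1 + k3 * l3.1.1),
  h.1.2 - (k1 * l1.1.2 + k2 * l2.1.2 + k3 * l3.1.2)), h.2 - (k1 * l1.2 + k2 * l2.2 + k3 * l3.2)).
have gE y : lineval g y = lineval h y - (k1 * lineval l1 y + k2 * lineval l2 y + k3 * lineval l3 y).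
  by rewrite /lineval /=; ring.
have := @lineval_eq0_noncollinear g _ _ _ p123; rewrite !gE.
rewrite l1p2 l1p3 l2p1 l2p3 l3p1 l3p2 /k1 /k2 /k3 !divfK // !mulr0 !addr0 !add0r !subrr.
move=> /(_ erefl erefl erefl x); rewrite gE => /eqP; rewrite subr_eq0 => /eqP ->.
by rewrite /bary /k1 /k2 /k3; ring.
Qed.

Lemma bary_sum x : bary l1 p1 x + bary l2 p2 x + bary l3 p3 x = 1.
Proof. by have := lineval_bary ((0, 0), -1) x; rewrite /lineval /= !mul0r !add0r opprK !mul1r. Qed.

Lemma triangle_bounded x : 0 <= bary l1 p1 x -> 0 <= bary l2 p2 x -> 0 <= bary l3 p3 x ->
  `|x.1| <= `|p1.1| + `|p2.1| + `|p3.1| /\ `|x.2| <= `|p1.2| + `|p2.2| + `|p3.2|.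
Proof.
move=> w1 w2 w3; have ws := bary_sum x.
have /= := lineval_bary ((1, 0), 0) x; have /= := lineval_bary ((0, 1), 0) x.
rewrite /lineval /= !mul1r !mul0r !subr0 !addr0 !add0r => -> ->.
by split; exact: norm_convex3.
Qed.

End Triangle.

Section Arrangement.
Variables (R : realType) (n : nat) (L : 'I_n -> R * R * R).
Hypothesis Hbdd : bounded_position L.
Hypothesis Hgen : general_position L.

Lemma lines_meet i j : i != j -> exists2 x, lineval (L i) x = 0 & lineval (L j) x = 0.
Proof.
move=> /Hbdd; set D := _ - _ => D0.
exists (((L i).2 * (L j).1.2 - (L j).2 * (L i).1.2) / D,
  ((L i).1.1 * (L j).2 - (L j).1.1 * (L i).2) / D); by rewrite /lineval /D /=; field.
Qed.

Lemma lines_meet_once i j x y : i != j -> lineval (L i) x = 0 -> lineval (L j) x = 0 ->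
  lineval (L i) y = 0 -> lineval (L j) y = 0 -> x = y.
Proof.
move=> /Hbdd D0 ix jx iy jy.
have di : linpart (L i) (vec y x) = 0 by rewrite linpart_vec ix iy subrr.
have dj : linpart (L j) (vec y x) = 0 by rewrite linpart_vec jx jy subrr.
move: di dj D0; clear ix jx iy jy; rewrite /linpart /vec; case: x y => [x1 x2] [y1 y2] /=.
set ai := (L i).1.1; set bi := (L i).1.2; set aj := (L j).1.1; set bj := (L j).1.2.
move=> di dj D0.
have e1 : (ai * bj - aj * bi) * (x1 - y1) =
    bj * (ai * (x1 - y1) + bi * (x2 - y2)) - bi * (aj * (x1 - y1) + bj * (x2 - y2)) by ring.
have e2 : (ai * bj - aj * bi) * (x2 - y2) =
    ai * (aj * (x1 - y1) + bj * (x2 - y2)) - aj * (ai * (x1 - y1) + bi * (x2 - y2)) by ring.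
rewrite di dj !mulr0 subrr in e1 e2.
move/eqP: e1; rewrite mulf_eq0 (negbTE D0) subr_eq0 => /eqP ->.
by move/eqP: e2; rewrite mulf_eq0 (negbTE D0) subr_eq0 => /eqP ->.
Qed.

Lemma linpart_dir_neq0 i j : i != j -> linpart (L j) (dir (L i)) != 0.
Proof.
move=> /Hbdd; rewrite /linpart /dir /=.
have -> : (L j).1.1 * - (L i).1.2 + (L j).1.2 * (L i).1.1 =
  (L i).1.1 * (L j).1.2 - (L j).1.1 * (L i).1.2 by ring.
done.
Qed.

Lemma other_line_unique i j j' x : j != i -> j' != i ->
  lineval (L i) x = 0 -> lineval (L j) x = 0 -> lineval (L j') x = 0 -> j' = j.
Proof.
move=> ji j'i /on_lineE li /on_lineE lj /on_lineE lj'; apply: contrapT => /eqP j'j.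
by apply: (Hgen (j := j) (k := j') _ _ _ li lj lj'); rewrite // eq_sym.
Qed.

Lemma vertex_other_line i x : vertex L x -> exists2 j, j != i & lineval (L j) x = 0.
Proof.
move=> [j [j' [jj' [/on_lineE lj /on_lineE lj']]]].
by have [ji|] := eqVneq j i; [exists j'; rewrite // -ji eq_sym | exists j].
Qed.

Lemma edge_on_lineval k E z : edge_on L k E -> E z -> lineval (L k) z = 0.
Proof. by move=> [p [q [_ [_ [_ [pk [qk [_ ->]]]]]]]]; exact: lineval_seg. Qed.

End Arrangement.

Section Cell.
Variables (R : realType) (n : nat) (L : 'I_n -> R * R * R) (s : 'I_n -> R).
Hypothesis Hline : forall i, is_line (L i).
Hypothesis Hbdd : bounded_position L.
Hypothesis Hgen : general_position L.
Hypothesis s_neq0 : forall i, s i != 0.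
Implicit Types (x y : R * R).

Definition side i x := s i * lineval (L i) x.
Definition cell : set (R * R) := [set x | forall i, 0 <= side i x].

Lemma side_along i x t d : side i (along x t d) = side i x + t * (s i * linpart (L i) d).
Proof. by rewrite /side lineval_along mulrDr mulrCA. Qed.

Lemma side_along_vec i x y t : side i (along x t (vec x y)) = (1 - t) * side i x + t * side i y.
Proof. by rewrite side_along linpart_vec /side; ring. Qed.

Lemma side_eq0 i x : side i x = 0 <-> lineval (L i) x = 0.
Proof.
rewrite /side; split=> [/eqP|->]; last exact: mulr0.
by rewrite mulf_eq0 (negbTE (s_neq0 i)) => /eqP.
Qed.

Lemma continuous_side i : continuous (side i).
Proof. by move=> x; apply: cvgM; [exact: cvg_cst | exact: continuous_lineval]. Qed.

Lemma closed_cell : closed cell.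
Proof.
have -> : cell = \bigcap_(i in [set: 'I_n]) (side i @^-1` [set z | 0 <= z]).
  by apply/seteqP; split=> x /= H i; [move=> _|]; apply: H.
apply: closed_bigI => i _; apply: preimage_closed; last exact: closed_ge.
by move=> y _; exact: continuous_side.
Qed.

Lemma convex_cell : Defs.convex_set cell.
Proof.
move=> p q cp cq z /seg_along [t [/andP[t0 t1] ->]] i.
by rewrite side_along_vec addr_ge0 // mulr_ge0 // subr_ge0.
Qed.

Lemma connected_cell x0 : cell x0 -> connected cell.
Proof.
move=> c0.
have -> : cell = \bigcup_(y in cell) seg x0 y.
  apply/seteqP; split=> [y cy|y [z cz]]; last exact: convex_cell.
  by exists y => //; apply/seg_along; exists 1; rewrite lexx ler01 along_vec1.
apply: bigcup_connected => [|y _].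
  by exists x0 => y _; apply/seg_along; exists 0; rewrite lexx ler01 along0.
have -> : seg x0 y = along x0 ^~ (vec x0 y) @` `[0, 1].
  apply/seteqP; split=> z; first by move=> [t [ht ->]]; exists t => //=; rewrite in_itv.
  by move=> [t /=]; rewrite in_itv /= => ht <-; exists t.
apply: connected_continuous_connected; first exact: segment_connected.
exact/continuous_subspaceT/continuous_along.
Qed.

Lemma cell_interiorE x : cell° x <-> forall i, 0 < side i x.
Proof.
split=> [cx i|pos]; last first.
  apply: (@filter_forall _ 'I_n (fun i y => 0 <= side i y) (nbhs x)) => i.
  have si : side i @ x --> side i x by exact: continuous_side.
  exact: (@cvgr_ge R _ (nbhs x) _ _ _ si 0 (pos i)).
rewrite lt_def (interior_subset cx i) andbT; apply/eqP => si0.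
(* moving from x against the normal of line i leaves the cell *)
pose nv := (- (s i * (L i).1.1), - (s i * (L i).1.2)).
have := @nbhs_along R x 0 nv cell; rewrite along0 => /(_ cx) [e e0 He].
have e2 : 0 < e / 2 by rewrite divr_gt0.
have := He (e / 2); rewrite sub0r normrN gtr0_norm // ltr_pdivrMr // ltr_pMr // ltr1n.
move=> /(_ isT) /(_ i); rewrite side_along si0 add0r.
have -> : s i * linpart (L i) nv = - (s i * s i * sqnorm (L i).1).
  by rewrite /linpart /sqnorm /=; ring.
have ss : 0 < s i * s i by rewrite -expr2 lt_def sqrf_eq0 s_neq0 sqr_ge0.
rewrite mulrN oppr_ge0 leNgt => /negP; apply.
exact: mulr_gt0 e2 (mulr_gt0 ss (sqnorm_gt0 (Hline i))).
Qed.

Lemma cell_boundaryE x : boundary cell x <-> cell x /\ exists i, lineval (L i) x = 0.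
Proof.
have cellE : closure cell = cell by apply/esym/closure_id; exact: closed_cell.
rewrite /boundary cellE; split=> [[cx nix]|[cx [i /side_eq0 si0]]]; split=> //.
  apply: contrapT => /forallNP H; apply: nix; apply/cell_interiorE => i.
  by rewrite lt_def (cx i) andbT; apply/eqP => /side_eq0; exact: H.
by move/cell_interiorE/(_ i); rewrite si0 ltxx.
Qed.

Lemma cell_step y d : cell y ->
  (forall j, lineval (L j) y = 0 -> 0 <= s j * linpart (L j) d) ->
  exists2 e, 0 < e & cell (along y e d).
Proof.
move=> cy H.
have [|e e0 He] := @small_step R _ (side ^~ y) (fun j => s j * linpart (L j) d).
  move=> j; have [sj0|sj0] := eqVneq (side j y) 0; last by left; rewrite lt_def sj0 cy.
  by right; split; last exact/H/(side_eq0 _ _).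
by exists e => // j; rewrite side_along; exact: (He j).1.
Qed.

Lemma cell_line_second_point i x : cell x -> lineval (L i) x = 0 ->
  exists y, [/\ cell y, y <> x & lineval (L i) y = 0].
Proof.
move=> cx lx.
(* by general position at most one other line passes through x; follow line i away from it *)
have [d [d0 di Hd]] : exists d, [/\ 0 < sqnorm d, linpart (L i) d = 0 &
    forall j, j != i -> lineval (L j) x = 0 -> 0 <= s j * linpart (L j) d].
  have diri := sqnorm_dir (Hline i); have dir0 := linpart_dir (L i).
  have [[j ji lj]|none] := pselect (exists2 j, j != i & lineval (L j) x = 0); last first.
    by exists (dir (L i)); split=> // j ji lj; case: none; exists j.
  have [pos|neg] := leP 0 (s j * linpart (L j) (dir (L i))).
    by exists (dir (L i)); split=> // j' j'i lj'; rewrite (other_line_unique Hgen ji j'i lx lj lj').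
  exists (- (dir (L i)).1, - (dir (L i)).2); rewrite sqnormN linpartN dir0 oppr0.
  split=> // j' j'i lj'; rewrite (other_line_unique Hgen ji j'i lx lj lj') linpartN mulrN.
  by rewrite oppr_ge0 ltW.
have [e e0 ce] : exists2 e, 0 < e & cell (along x e d).
  apply: cell_step => // j lj.
  by have [->|ji] := eqVneq j i; [rewrite di mulr0 | exact: Hd].
exists (along x e d); split=> //; last by rewrite lineval_along lx di mulr0 addr0.
by rewrite -{2}(along0 x d) => /(along_inj d0) e00; rewrite e00 ltxx in e0.
Qed.

Lemma cell_chord_off_line j x d a b u : s j * linpart (L j) d != 0 ->
  cell (along x a d) -> cell (along x b d) -> a < b -> 0 < u < 1 ->
  lineval (L j) (along x (a + u * (b - a)) d) != 0.
Proof.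
move=> sl ca cb ab /andP[u0 u1]; apply/eqP => /(side_eq0 _ _).
rewrite -along_vec side_along_vec.
have hA := ca j; have hB := cb j.
set A := side j (along x a d) in hA *; set B := side j (along x b d) in hB * => h0.
have k1 : 0 <= (1 - u) * A by rewrite mulr_ge0 // subr_ge0 ltW.
have k2 : 0 <= u * B by rewrite mulr_ge0 // ltW.
have /eqP : (1 - u) * A = 0 by lra.
rewrite mulf_eq0 subr_eq0 eq_sym (lt_eqF u1) /= => /eqP A0.
have /eqP : u * B = 0 by lra.
rewrite mulf_eq0 (gt_eqF u0) /= => /eqP B0.
have : B - A = (b - a) * (s j * linpart (L j) d) by rewrite /A /B !side_along; ring.
by rewrite A0 B0 subrr => /esym/eqP; rewrite mulf_eq0 subr_eq0 (gt_eqF ab) (negbTE sl).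
Qed.

Lemma cell_minimal W : W `<=` cell -> W <> cell -> ~ alcove_like L W.
Proof.
move=> Wc Wnc [cW _ _ [w Ww] [K [E [HE bE]]]].
have [x cx nWx] : exists2 x, cell x & ~ W x.
  apply: contrapT => H; apply: Wnc; apply/seteqP; split=> // z cz.
  by apply: contrapT => nWz; apply: H; exists z.
have clW := compact_closed (@norm_hausdorff _ _) cW.
have [l /andP[l0 l1]] := seg_boundary_point clW (interior_subset Ww) nWx.
rewrite bE => -[k Kk /(edge_on_lineval (HE k Kk)) /(side_eq0 k)].
have wk : 0 < side k w := (cell_interiorE w).1 (interiorS Wc Ww) k.
have h1 : 0 < (1 - l) * side k w by rewrite mulr_gt0 // subr_gt0.
have h2 : 0 <= l * side k x by rewrite mulr_ge0 // cx.
by rewrite side_along_vec; lra.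
Qed.

Lemma bary_ge0 i y x : cell x -> 0 < side i y -> 0 <= bary (L i) y x.
Proof.
move=> cx sy; have ly : lineval (L i) y != 0.
  by apply/eqP => /(side_eq0 i) e; rewrite e ltxx in sy.
have -> : bary (L i) y x = side i x / side i y.
  by rewrite /bary /side; field; rewrite ly s_neq0.
exact: divr_ge0 (cx i) (ltW sy).
Qed.

Definition face i := [set z | cell z /\ lineval (L i) z = 0].

Section Face.
Variables (i : 'I_n) (x : R * R) (t1 t2 : R).
Hypothesis lx : lineval (L i) x = 0.
Hypothesis t12 : 0 < t2 + t1.
Hypothesis face_range : forall t, cell (along x t (dir (L i))) <-> - t1 <= t <= t2.
Local Notation P := (along x (- t1) (dir (L i))).
Local Notation Q := (along x t2 (dir (L i))).

Lemma along_face u : along P u (vec P Q) = along x (- t1 + u * (t2 + t1)) (dir (L i)).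
Proof. by rewrite along_vec opprK. Qed.

Lemma face_seg : face i = seg P Q.
Proof.
have on_i t : lineval (L i) (along x t (dir (L i))) = 0.
  by rewrite lineval_along lx linpart_dir mulr0 addr0.
apply/seteqP; split=> z.
- move=> [+ lz]; have [t ->] := line_param (Hline i) lx lz => /face_range/andP[z1 z2].
  apply/seg_along; exists ((t + t1) / (t2 + t1)); rewrite along_face; split.
    by rewrite divr_ge0 ?ler_pdivrMr ?mul1r //=; lra.
  by congr along; field; rewrite gt_eqF.
- move=> /seg_along [u [/andP[u0 u1] ->]]; rewrite along_face; split; last exact: on_i.
  have k1 : 0 <= u * (t2 + t1) by rewrite mulr_ge0 // ltW.
  have k2 : u * (t2 + t1) <= t2 + t1 by rewrite ler_piMl // ltW.
  by apply/face_range; lra.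
Qed.

Lemma face_no_inner_vertex z : vertex L z -> seg P Q z -> z = P \/ z = Q.
Proof.
move=> vz /seg_along [u [/andP[u0 u1] ez]]; rewrite ez.
have [->|un0] := eqVneq u 0; first by left; rewrite along0.
have [->|un1] := eqVneq u 1; first by right; rewrite along_vec1.
exfalso; have [j ji] := vertex_other_line i vz; apply/eqP.
have t1t2 : - t1 < t2 by rewrite -subr_gt0 opprK.
rewrite ez along_vec; apply: cell_chord_off_line => //.
- by rewrite mulf_neq0 ?s_neq0 ?(linpart_dir_neq0 Hbdd) // eq_sym.
- by apply/face_range; rewrite lexx ltW.
- by apply/face_range; rewrite lexx ltW.
- by rewrite !lt_def un0 u0 eq_sym un1 u1.
Qed.

End Face.

Section BoundedCell.
Variable M : R.
Hypothesis cell_bounded : forall x, cell x -> `|x.1| <= M /\ `|x.2| <= M.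

Lemma compact_cell : compact cell.
Proof.
apply: (subclosed_compact closed_cell
  (compact_setX (@segment_compact R (- M) M) (@segment_compact R (- M) M))).
by move=> x /cell_bounded [h1 h2]; split=> /=; rewrite in_itv /= -ler_norml.
Qed.

Lemma cell_ray x d : cell x -> 0 < sqnorm d ->
  exists2 t2, 0 <= t2 & forall t, 0 <= t -> cell (along x t d) <-> t <= t2.
Proof.
move=> cx d0.
pose T := [set t | 0 <= t] `&` along x ^~ d @^-1` cell.
have hT : has_sup T.
  split; first by exists 0; split; rewrite /= ?along0.
  exists ((`|d.1| * (M + `|x.1|) + `|d.2| * (M + `|x.2|)) / sqnorm d).
  move=> t [/= t0 /cell_bounded [y1 y2]]; rewrite ler_pdivlMr //.
  have -> : t * sqnorm d = d.1 * ((along x t d).1 - x.1) + d.2 * ((along x t d).2 - x.2).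
    by rewrite /sqnorm /along /=; ring.
  apply: lerD; apply: le_trans (ler_norm _) _; rewrite normrM ler_wpM2l //;
    by apply: le_trans (ler_normB _ _) _; rewrite lerD2r.
have [/= t20 ct2] : T (sup T).
  apply: closed_sup_mem; [|exact: hT.1|exact: hT.2].
  apply: closedI; first exact: closed_ge.
  by apply: preimage_closed closed_cell => t _; exact: continuous_along.
exists (sup T) => // t t0; split=> [ct|tt2]; first exact: (sup_upper_bound hT (conj t0 ct)).
have [t2z|t2n] := eqVneq (sup T) 0.
  have -> : t = 0 by apply/eqP; rewrite eq_le t0 andbT -t2z.
  by rewrite along0.
rewrite -(divfK t2n t) -along_vec0.
apply: (convex_cell cx ct2); apply/seg_along; exists (t / sup T); split=> //.
by rewrite divr_ge0 //= ler_pdivrMr ?mul1r // lt_def t2n.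
Qed.

Lemma cell_ray_exit i x d : cell x -> lineval (L i) x = 0 -> linpart (L i) d = 0 ->
  0 < sqnorm d ->
  exists t2, [/\ 0 <= t2, forall t, 0 <= t -> cell (along x t d) <-> t <= t2
    & exists2 j, j != i & lineval (L j) (along x t2 d) = 0].
Proof.
move=> cx lx di d0; have [t2 t20 Ht] := cell_ray cx d0.
exists t2; split=> //; apply: contrapT => none.
have [e e0] : exists2 e, 0 < e & cell (along (along x t2 d) e d).
  apply: cell_step; first exact/(Ht _ t20).
  move=> j lj; have [->|ji] := eqVneq j i; first by rewrite di mulr0.
  by case: none; exists j.
by rewrite alongD => /(Ht _ (addr_ge0 t20 (ltW e0))); lra.
Qed.

Lemma cell_face_bounds i x : cell x -> lineval (L i) x = 0 ->
  exists t1 t2, [/\ forall tau, cell (along x tau (dir (L i))) <-> - t1 <= tau <= t2,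
    exists2 j, j != i & lineval (L j) (along x (- t1) (dir (L i))) = 0 &
    exists2 j, j != i & lineval (L j) (along x t2 (dir (L i))) = 0].
Proof.
move=> cx lx; set d := dir (L i).
have d0 : 0 < sqnorm d := sqnorm_dir (Hline i).
have [t2 [t20 H2 j2]] := cell_ray_exit cx lx (linpart_dir _) d0.
have dN : linpart (L i) (- d.1, - d.2) = 0 by rewrite linpartN linpart_dir oppr0.
have dN0 : 0 < sqnorm (- d.1, - d.2) by rewrite sqnormN.
have [t1 [t10 H1 j1]] := cell_ray_exit cx lx dN dN0.
rewrite alongN in j1; exists t1, t2; split=> // tau.
have [tau0|tau0] := leP 0 tau.
  by rewrite H2 //; split=> [h|/andP[_ //]]; apply/andP; split; lra.
have := H1 (- tau); rewrite alongN opprK => ->; last by lra.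
by split=> [h|/andP[h _]]; [apply/andP; split|]; lra.
Qed.


Lemma edge_on_face i x y : cell x -> cell y -> x <> y ->
  lineval (L i) x = 0 -> lineval (L i) y = 0 -> edge_on L i (face i).
Proof.
move=> cx cy xy lx ly; set d := dir (L i).
have on_i t : lineval (L i) (along x t d) = 0.
  by rewrite lineval_along lx linpart_dir mulr0 addr0.
have [t1 [t2 [Hc [j1 j1i l1] [j2 j2i l2]]]] := cell_face_bounds cx lx.
have [tau ytau] := line_param (Hline i) lx ly.
have /Hc/andP[x1 x2] : cell (along x 0 d) by rewrite along0.
have /Hc/andP[y1 y2] : cell (along x tau d) by rewrite -ytau.
have tau0 : tau != 0 by apply/eqP => t0; apply: xy; rewrite ytau t0 along0.
have t12 : 0 < t2 + t1 by move: tau0; rewrite neq_lt => /orP[] ?; lra.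
exists (along x (- t1) d), (along x t2 d).
split; [|split; [|split; [|split; [|split; [|split]]]]].
- by move/(along_inj (sqnorm_dir (Hline i))); lra.
- by exists j1, i; split=> //; split; apply/on_lineE; [exact: l1 | exact: on_i].
- by exists j2, i; split=> //; split; apply/on_lineE; [exact: l2 | exact: on_i].
- exact/on_lineE/on_i.
- exact/on_lineE/on_i.
- exact: face_no_inner_vertex t12 Hc.
- exact: face_seg lx t12 Hc.
Qed.

Lemma cell_boundary_edges : boundary_of_edges L cell.
Proof.
exists [set i | exists x y, [/\ cell x, cell y, x <> y, lineval (L i) x = 0 & lineval (L i) y = 0]].
exists face; split=> [i [x [y [cx cy xy lx ly]]]|]; first exact: edge_on_face cx cy xy lx ly.
apply/seteqP; split=> x.
- move/cell_boundaryE => [cx [i li]].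
  have [y [cy yx ly]] := cell_line_second_point cx li.
  by exists i => //; exists x, y; split=> // /esym.
- by move=> [i _ [cx lx]]; apply/cell_boundaryE; split=> //; exists i.
Qed.

Lemma alcove_cell : cell° !=set0 -> alcove L cell.
Proof.
move=> [x0 x0i]; split; last by move=> W; exact: cell_minimal.
split; [exact: compact_cell | exact: convex_cell | exact: connected_cell (interior_subset x0i)
       | by exists x0 | exact: cell_boundary_edges].
Qed.

End BoundedCell.

End Cell.

Section EdgeCell.
Variables (R : realType) (n : nat) (L : 'I_n -> R * R * R).
Hypothesis Hline : forall i, is_line (L i).
Hypothesis Hbdd : bounded_position L.
Hypothesis Hgen : general_position L.
Variables (k a b : 'I_n) (p q r : R * R).
Hypotheses (pq : p <> q) (pk : lineval (L k) p = 0) (qk : lineval (L k) q = 0).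
Hypotheses (ak : a != k) (pa : lineval (L a) p = 0) (bk : b != k) (qb : lineval (L b) q = 0).
Hypothesis no_inner_vertex : forall z, vertex L z -> seg p q z -> z = p \/ z = q.

Lemma edge_lines_neq : a != b.
Proof.
apply: contra_notN pq => /eqP ab.
by apply: (lines_meet_once Hbdd ak pa pk _ qk); rewrite ab.
Qed.

Hypotheses (ra : lineval (L a) r = 0) (rb : lineval (L b) r = 0).

Lemma apex_off_edge_line : lineval (L k) r != 0.
Proof.
apply/eqP => /on_lineE rk; have /on_lineE ra' := ra; have /on_lineE rb' := rb.
exact: (Hgen edge_lines_neq bk ak ra' rb' rk).
Qed.

Lemma lineval_k_edge t : lineval (L k) (along p t (vec p q)) = 0.
Proof. by rewrite lineval_along linpart_vec pk qk subrr mulr0 addr0. Qed.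

Lemma edge_off_lines i t : i != k -> 0 < t < 1 -> lineval (L i) (along p t (vec p q)) != 0.
Proof.
move=> ik /andP[t0 t1]; apply/eqP => li.
have vz : vertex L (along p t (vec p q)).
  by exists i, k; split=> //; split; apply/on_lineE; rewrite // lineval_k_edge.
have : seg p q (along p t (vec p q)) by apply/seg_along; exists t; rewrite !ltW.
have hd := sqnorm_vec_gt0 pq.
case/(no_inner_vertex vz) => [e0|e1].
- have : along p t (vec p q) = along p 0 (vec p q) by rewrite along0.
  by move/(along_inj hd) => te; rewrite te ltxx in t0.
- have : along p t (vec p q) = along p 1 (vec p q) by rewrite along_vec1.
  by move/(along_inj hd) => te; rewrite te ltxx in t1.
Qed.

Local Notation mid := (along p 2^-1 (vec p q)).

Definition edge_sign i := Num.sg (lineval (L i) (if i == k then r else mid)).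

Lemma edge_sign_neq0 i : edge_sign i != 0.
Proof.
rewrite /edge_sign sgr_eq0; case: ifP => [/eqP ->|/negbT ik]; first exact: apex_off_edge_line.
exact: edge_off_lines ik (half_in_unit R).
Qed.

Local Notation side := (side L edge_sign).
Local Notation cell := (cell L edge_sign).

Lemma edge_sign_side_gt0 i : 0 < side i (if i == k then r else mid).
Proof. by rewrite /side /edge_sign -normrEsg normr_gt0 -sgr_eq0 edge_sign_neq0. Qed.

Lemma side_mid_gt0 i : i != k -> 0 < side i mid.
Proof. by move=> ik; have := edge_sign_side_gt0 i; rewrite (negbTE ik). Qed.

Lemma side_apex_gt0 : 0 < side k r.
Proof. by have := edge_sign_side_gt0 k; rewrite eqxx. Qed.

Lemma edge_sub_cell : seg p q `<=` cell.
Proof.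
move=> z /seg_along [t [t01 ->]] i.
have [->|ik] := eqVneq i k; first by rewrite /side lineval_k_edge mulr0.
have := side_mid_gt0 ik; rewrite !side_along => mid_gt0.
apply: affine_ge0_unit mid_gt0 _ t01 => u u01; rewrite -side_along.
by apply/eqP => /(side_eq0 L edge_sign_neq0) /eqP; apply/negP; exact: edge_off_lines.
Qed.

Lemma cell_edge_bounded : exists M, forall x, cell x -> `|x.1| <= M /\ `|x.2| <= M.
Proof.
have sideE i : side i mid = 2^-1 * side i p + 2^-1 * side i q.
  by rewrite side_along_vec; congr (_ * _ + _); rewrite {1}(splitr 1) mul1r addrK.
have half : 0 < 2^-1 :> R by case/andP: (half_in_unit R).
have bp : 0 < side b p.
  have bq : side b q = 0 by apply/(side_eq0 L edge_sign_neq0).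
  by have := side_mid_gt0 bk; rewrite sideE bq mulr0 addr0 pmulr_rgt0.
have aq : 0 < side a q.
  have ap : side a p = 0 by apply/(side_eq0 L edge_sign_neq0).
  by have := side_mid_gt0 ak; rewrite sideE ap mulr0 add0r pmulr_rgt0.
have lv_neq0 i y : 0 < side i y -> lineval (L i) y != 0.
  by move=> sy; apply/eqP => /(side_eq0 L edge_sign_neq0) e; rewrite e ltxx in sy.
have pqr := noncollinear_off_line pq pk qk apex_off_edge_line.
exists ((`|p.1| + `|q.1| + `|r.1|) + (`|p.2| + `|q.2| + `|r.2|)) => x cx.
have kr := side_apex_gt0.
have [] := triangle_bounded pqr qb rb pa ra pk qk (lv_neq0 _ _ bp) (lv_neq0 _ _ aq) (lv_neq0 _ _ kr)
  (bary_ge0 edge_sign_neq0 cx bp) (bary_ge0 edge_sign_neq0 cx aq) (bary_ge0 edge_sign_neq0 cx kr).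
have n1 : 0 <= `|p.1| + `|q.1| + `|r.1| by rewrite !addr_ge0.
have n2 : 0 <= `|p.2| + `|q.2| + `|r.2| by rewrite !addr_ge0.
by move=> *; split; lra.
Qed.

Lemma cell_edge_interior : cell° !=set0.
Proof.
have kmid : side k mid = 0 by apply/(side_eq0 L edge_sign_neq0); exact: lineval_k_edge.
have [|e e0 He] := @small_step R _ (side ^~ mid) (fun i => side i r - side i mid).
  move=> i; have [->|ik] := eqVneq i k; last by left; exact: side_mid_gt0.
  by right; rewrite kmid subr0; split=> //; exact/ltW/side_apex_gt0.
exists (along mid e (vec mid r)); apply/(cell_interiorE Hline edge_sign_neq0) => i.
have -> : side i (along mid e (vec mid r)) = side i mid + e * (side i r - side i mid).
  by rewrite side_along_vec; ring.
have [->|ik] := eqVneq i k.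
  by rewrite kmid subr0 add0r mulr_gt0 // side_apex_gt0.
exact/(He i).2/side_mid_gt0.
Qed.

Lemma edge_in_alcove_boundary : exists V, alcove L V /\ seg p q `<=` boundary V.
Proof.
have [M HM] := cell_edge_bounded.
exists cell; split; first exact: (alcove_cell Hline Hbdd Hgen edge_sign_neq0 HM cell_edge_interior).
move=> z zpq; apply/(cell_boundaryE Hline edge_sign_neq0); split; first exact: edge_sub_cell.
by exists k; apply: lineval_seg zpq; apply/on_lineE.
Qed.

End EdgeCell.

Unset Implicit Arguments.

Theorem lemma1p9 (R : realType) (n : nat) (L : 'I_n -> R * R * R)
  (Hline : forall i, is_line (L i))
  (Hbdd : bounded_position L) (Hgen : general_position L)
  (E : set (R * R)) (HE : edge L E) :
  exists V : set (R * R), alcove L V /\ E `<=` boundary V.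
Proof.
have [k [p [q [pq [vp [vq [/on_lineE pk [/on_lineE qk [inner ->]]]]]]]]] := HE.
have [a ak pa] := vertex_other_line k vp.
have [b bk qb] := vertex_other_line k vq.
have [r ra rb] := lines_meet Hbdd (edge_lines_neq Hbdd pq pk qk ak pa qb).
exact: (edge_in_alcove_boundary Hline Hbdd Hgen pq pk qk ak pa bk qb inner ra rb).
Qed.
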